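(* Let $K=\mathsf{p}^k$ and let $\mathcal{C}\subset (\mathbb{C}^{\mathsf{p}})^{\otimes n}$ be a subspace with orthonormal basis $\{\psi_\alpha\}_{\alpha\in [K]}$ such that, for some $\gamma>0$, \[ \big|\langle\psi_\alpha| F|\psi_\beta\rangle-\delta_{\alpha,\beta}\langle\psi_1| F|\psi_1\rangle\big|\leq \gamma\, \|F\|\qquad\text{for all }\alpha,\beta\in [K] \] and for every $d$-local operator $F$ on $(\mathbb{C}^{\mathsf{p}})^{\otimes n}$. Let $\delta > K^5\gamma^2$. Then $\mathcal{C}$ is an $(\epsilon,\delta)[[n,k,d]]$-AQEDC with $\epsilon=K^5\gamma^2 \delta^{-1}$.
   Context: An operator on $(\mathbb{C}^\mathsf{p})^{\otimes n}$ is $d$-local if it is of the form $F_S\otimes I_{[n]\setminus S}$ for some set $S\subset[n]$ of $d$ sites (the sites need not be contiguous); $\|\cdot\|$ is the operator norm. For a CPTP map $\mathcal{N}$ on $\mathcal{B}((\mathbb{C}^\mathsf{p})^{\otimes n})$ and a subspace $\mathcal{C}$ with projection $P$, $\mathcal{C}$ is an $(\epsilon,\delta)$-approximate error-detection code for $\mathcal{N}$ if for every unit vector $|\Psi\rangle\in\mathcal{C}$: if $\mathrm{tr}(P\mathcal{N}(|\Psi\rangle\langle\Psi|))\geq\delta$ then $\langle\Psi|\rho_{\mathcal{N},P}|\Psi\rangle\geq 1-\epsilon$, where $\rho_{\mathcal{N},P}=\mathrm{tr}(P\mathcal{N}(|\Psi\rangle\langle\Psi|))^{-1}P\mathcal{N}(|\Psi\rangle\langle\Psi|)P$.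 An $(\epsilon,\delta)[[n,k,d]]$-AQEDC is a $\mathsf{p}^k$-dimensional subspace $\mathcal{C}\subset(\mathbb{C}^\mathsf{p})^{\otimes n}$ which is an $(\epsilon,\delta)$-approximate error-detection code for every CPTP map of the form $\mathcal{N}(\rho)=\sum_{j\in[J]}p_jF_j\rho F_j^\dagger$, where each $F_j$ is $d$-local with $\|F_j\|\le 1$ and $\{p_j\}$ is a probability distribution. *)

From HB Require Import structures.
From mathcomp Require Import all_boot all_order all_algebra.
From mathcomp Require Import classical_sets reals.
From mathcomp Require Import complex.
Set Implicit Arguments. Unset Strict Implicit. Unset Printing Implicit Defensive.
Import Order.TTheory GRing.Theory Num.Theory.
Local Open Scope ring_scope.
Local Open Scope classical_set_scope.

(* Computational basis of (C^p)^{⊗n}: configurations x : [n] -> [p]. *)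
Definition cfg (p n : nat) := {ffun 'I_n -> 'I_p}.
(* dimension p^n of the Hilbert space (as #|cfg p n|); basis vector with
   index i : 'I_(hdim p n) is |enum_val i>. *)
Definition hdim (p n : nat) := #|{: cfg p n}|.

Section Defs.
Variable R : realType.
Local Notation C := (R[i]).
Variables p n : nat.
Local Notation N := (hdim p n).
Local Notation op := ('M[C]_N).
Local Notation vec := ('cV[C]_N).

Definition adj (m1 m2 : nat) (A : 'M[C]_(m1, m2)) : 'M[C]_(m2, m1) :=
  (map_mx (@conjc R) A)^T.

Definition vnorm (v : vec) : R :=
  Num.sqrt (\sum_i (Normc.normc (v i 0)) ^+ 2).

Definition opnorm (A : op) : R :=
  sup [set vnorm (A *m v) | v in [set v : vec | vnorm v = 1]].

Definition agree_on (S : {set 'I_n}) (x y : cfg p n) : bool :=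
  [forall i in S, x i == y i].

(* A is d-local: A = F_S (x) I_{[n]\S} for a set S of d sites, i.e. its
   matrix entries are <x|A|y> = <x_S|F_S|y_S> * [x_{S^c} = y_{S^c}], where
   the entries of F_S only depend on the restrictions x_S, y_S. *)
Definition dlocal (d : nat) (A : op) : Prop :=
  exists S : {set 'I_n}, #|S| = d /\
  exists G : cfg p n -> cfg p n -> C,
    (forall x y x' y', agree_on S x x' -> agree_on S y y' -> G x y = G x' y') /\
    (forall i j : 'I_N, A i j =
       if agree_on (~: S) (enum_val i) (enum_val j)
       then G (enum_val i) (enum_val j) else 0).

Definition braket (u : vec) (A : op) (v : vec) : C := (adj u *m A *m v) 0 0.

Definition is_onfamily (K : nat) (psi : 'I_K -> vec) : Prop :=
  forall a b, (adj (psi a) *m psi b) 0 0 = (a == b)%:R.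

Definition codeproj (K : nat) (psi : 'I_K -> vec) : op :=
  \sum_a (psi a *m adj (psi a)).

Definition approx_detect (Nch : op -> op) (P : op) (eps delta : R) : Prop :=
  forall Psi : vec, vnorm Psi = 1 -> P *m Psi = Psi ->
    let rho := Psi *m adj Psi in
    let t := \tr (P *m Nch rho) in
    delta <= complex.Re t ->
    1 - eps <= complex.Re (braket Psi (t^-1 *: (P *m Nch rho *m P)) Psi).

(* (eps,delta)[[n,k,d]]-AQEDC: the span of the orthonormal family psi
   (of size p^k) detects every CPTP map N(rho) = sum_j p_j F_j rho F_j^dag
   with each F_j d-local, ||F_j|| <= 1, {p_j} a probability distribution. *)
Definition AQEDC (k d : nat) (eps delta : R) (psi : 'I_(p ^ k) -> vec) : Prop :=
  is_onfamily psi /\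
  forall (J : nat) (pr : 'I_J -> R) (F : 'I_J -> op),
    (forall j, 0 <= pr j) -> \sum_j pr j = 1 ->
    (forall j, dlocal d (F j)) -> (forall j, opnorm (F j) <= 1) ->
    \sum_j (((pr j)%:C)%C *: (adj (F j) *m F j)) = 1%:M ->
    approx_detect (fun rho => \sum_j (((pr j)%:C)%C *: (F j *m rho *m adj (F j))))
                  (codeproj psi) eps delta.
End Defs.

From HB Require Import structures.
From mathcomp Require Import all_boot all_order all_algebra.
From mathcomp Require Import classical_sets reals.
From mathcomp Require Import complex.
From mathcomp Require Import ring lra.
Import Order.TTheory GRing.Theory Num.Theory.

(* Write Psi = \sum_a c_a psi_a for a unit vector of the code and
   u_a = <psi_a|F|Psi>.  Then tr(P N(rho)) = \sum_j p_j ||u^(j)||^2, while the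
   unnormalised fidelity is \sum_j p_j |<Psi|F_j|Psi>|^2 = \sum_j p_j |<c,u^(j)>|^2,
   so the trace times the infidelity is an average of the spreads
   ||u||^2 - |<c,u>|^2.  As <psi_a|F|psi_b> is within gamma of lam delta_ab, we
   have u = lam c + e with |e_a| <= K gamma; the component lam c does not
   contribute to the spread, which is thus at most ||e||^2 <= K^3 gamma^2.
   Dividing by the trace, at least delta, bounds the infidelity by
   K^3 gamma^2 / delta <= epsilon. *)

(* ring_scope is opened last so that x^* is Num.conj, for which the
   conjugation lemmas of ssrnum apply. *)
Local Open Scope complex_scope.
Local Open Scope ring_scope.

Local Notation nc := (@Normc.normc _).

Section ComplexNorm.
Context {R : rcfType}.

Lemma normcE (x : R[i]) : (nc x)%:C = `|x|.
Proof. by []. Qed.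

Lemma normc_sqrE (x : R[i]) : (nc x ^+ 2)%:C = x * x^*.
Proof. by rewrite rmorphXn /= normcE sqr_normc. Qed.

Lemma normc_ge0 (x : R[i]) : 0 <= nc x.
Proof. by rewrite -lecR normcE normr_ge0. Qed.

Lemma normc_sum_le {I : finType} (G : I -> R[i]) : nc (\sum_i G i) <= \sum_i nc (G i).
Proof. by rewrite -lecR rmorph_sum /=; apply: (ler_norm_sum _ G). Qed.

End ComplexNorm.

Section Spread.
Context {R : rcfType} {m : nat} (c : 'I_m -> R[i]).

(* For v_a = <psi_a|F|Psi>: the weight that F moves inside the code but off Psi. *)
Definition spread (v : 'I_m -> R[i]) : R :=
  \sum_a nc (v a) ^+ 2 - nc (\sum_a (c a)^* * v a) ^+ 2.

Lemma spreadE v :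
  (spread v)%:C = \sum_a v a * (v a)^*
                  - (\sum_a (c a)^* * v a) * (\sum_a (c a)^* * v a)^*.
Proof.
rewrite rmorphB rmorph_sum /= normc_sqrE.
by congr (_ - _); apply: eq_bigr => a _; rewrite normc_sqrE.
Qed.

Lemma eq_spread v w : v =1 w -> spread v = spread w.
Proof.
move=> vw; rewrite /spread; congr (_ - nc _ ^+ 2).
  by apply: eq_bigr => a _; rewrite vw.
by apply: eq_bigr => a _; rewrite vw.
Qed.

Lemma spread_le_sum v : spread v <= \sum_a nc (v a) ^+ 2.
Proof. by rewrite lerBlDr lerDl sqr_ge0. Qed.

Hypothesis c_unit : \sum_a (c a)^* * c a = 1.

Lemma normc_coord_le1 b : nc (c b) <= 1.
Proof.
have sum1 : \sum_a nc (c a) ^+ 2 = 1.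
  apply: complexI; rewrite rmorph_sum /= rmorph1 -c_unit.
  by apply: eq_bigr => a _; rewrite normc_sqrE mulrC.
have : nc (c b) ^+ 2 <= 1.
  by rewrite -sum1 (bigD1 b) //= lerDl sumr_ge0 // => a _; apply: sqr_ge0.
by have := normc_ge0 (c b); nra.
Qed.

Lemma spread_shift (lam : R[i]) (e : 'I_m -> R[i]) :
  spread (fun a => c a * lam + e a) = spread e.
Proof.
apply: complexI; rewrite !spreadE.
set s := \sum_a (c a)^* * e a.
have -> : \sum_a (c a)^* * (c a * lam + e a) = lam + s.
  under eq_bigr do rewrite mulrDr.
  rewrite big_split /= -/s -[X in _ = X + _]mulr1 -c_unit mulr_sumr; congr (_ + _).
  by apply: eq_bigr => a _; ring.
have -> : \sum_a (c a * lam + e a) * (c a * lam + e a)^*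
    = lam * lam^* * (\sum_a (c a)^* * c a) + lam * s^*
      + lam^* * s + \sum_a e a * (e a)^*.
  rewrite /s rmorph_sum /= !mulr_sumr -!big_split /=; apply: eq_bigr => a _.
  by rewrite !rmorphD !rmorphM /= conjCK; ring.
by rewrite c_unit; ring.
Qed.

Lemma normc_coord_comb_le (E : 'I_m -> R[i]) (g : R) :
  (forall b, nc (E b) <= g) -> nc (\sum_b c b * E b) <= m%:R * g.
Proof.
move=> E_le; apply: le_trans (normc_sum_le (fun b => c b * E b)) _.
have -> : m%:R * g = \sum_(b < m) g by rewrite sumr_const card_ord mulr_natl.
apply: ler_sum => b _; rewrite Normc.normcM.
have := normc_coord_le1 b; have := E_le b.
by have := normc_ge0 (c b); have := normc_ge0 (E b); nra.
Qed.

Lemma spread_near_scalar_le (B : 'I_m -> 'I_m -> R[i]) (lam : R[i]) (g : R) :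
  (forall a b, nc (B a b - (a == b)%:R * lam) <= g) ->
  spread (fun a => \sum_b c b * B a b) <= m%:R ^+ 3 * g ^+ 2.
Proof.
move=> B_near.
pose e a := \sum_b c b * (B a b - (a == b)%:R * lam).
rewrite (eq_spread _ (fun a => c a * lam + e a)) => [|a]; last first.
  have delta_sum : \sum_b c b * ((a == b)%:R * lam) = c a * lam.
    rewrite (bigD1 a) //= eqxx mul1r big1 ?addr0 // => b nab.
    by rewrite eq_sym (negbTE nab) mul0r mulr0.
  rewrite /e; under [in RHS]eq_bigr do rewrite mulrBr.
  by rewrite sumrB delta_sum addrC subrK.
rewrite spread_shift; apply: le_trans (spread_le_sum _) _.
have -> : m%:R ^+ 3 * g ^+ 2 = \sum_(a < m) (m%:R * g) ^+ 2.
  by rewrite sumr_const card_ord -mulr_natl; ring.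
apply: ler_sum => a _.
have := normc_coord_comb_le _ _ (B_near a); have := normc_ge0 (e a).
rewrite -/(e a); nra.
Qed.

End Spread.

Section Adjoint.
Context {R : realType}.
Local Notation C := R[i].

Lemma adjE {m1 m2} (A : 'M[C]_(m1, m2)) i j : adj A i j = (A j i)^*.
Proof. by rewrite !mxE. Qed.

Lemma adjM {m1 m2 m3} (A : 'M[C]_(m1, m2)) (B : 'M[C]_(m2, m3)) :
  adj (A *m B) = adj B *m adj A.
Proof. by rewrite /adj map_mxM trmx_mul. Qed.

Lemma adjK {m1 m2} (A : 'M[C]_(m1, m2)) : adj (adj A) = A.
Proof. by apply/matrixP => i j; rewrite !adjE conjCK. Qed.

Lemma adj_sum {I : finType} {m1 m2} (G : I -> 'M[C]_(m1, m2)) :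
  adj (\sum_i G i) = \sum_i adj (G i).
Proof.
apply/matrixP => i j; rewrite adjE !summxE rmorph_sum.
by apply: eq_bigr => k _; rewrite adjE.
Qed.

Lemma mulmx11E (A B : 'M[C]_1) : (A *m B) 0 0 = A 0 0 * B 0 0.
Proof. by rewrite mxE big_ord1. Qed.

Context {p n : nat}.
Local Notation N := (hdim p n).

Lemma braketZ (u v : 'cV[C]_N) (a : C) (A : 'M[C]_N) :
  braket u (a *: A) v = a * braket u A v.
Proof. by rewrite /braket -scalemxAr -scalemxAl mxE. Qed.

Lemma braket_sum (I : finType) (u v : 'cV[C]_N) (A : I -> 'M[C]_N) :
  braket u (\sum_i A i) v = \sum_i braket u (A i) v.
Proof. by rewrite /braket mulmx_sumr mulmx_suml summxE. Qed.

Lemma braket_sandwich (u : 'cV[C]_N) (G : 'M[C]_N) :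
  braket u (G *m (u *m adj u) *m adj G) u = (nc (braket u G u) ^+ 2)%:C.
Proof.
rewrite normc_sqrE /braket !mulmxA.
rewrite -[adj u *m G *m u *m adj u *m adj G *m u]mulmxA.
rewrite -[adj u *m G *m u *m adj u *m (adj G *m u)]mulmxA mulmx11E.
by congr (_ * _); rewrite -{2}[u]adjK -!adjM adjE.
Qed.

End Adjoint.

Section CodeSpace.
Variables (R : realType) (p n K : nat) (psi : 'I_K -> 'cV[R[i]]_(hdim p n)).
Local Notation C := R[i].
Local Notation N := (hdim p n).
Local Notation P := (codeproj psi).

Lemma codeproj_adj : adj P = P.
Proof. by rewrite adj_sum; apply: eq_bigr => a _; rewrite adjM adjK. Qed.

Lemma tr_codeproj_sandwich (u : 'cV[C]_N) (G : 'M[C]_N) :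
  \tr (P *m (G *m (u *m adj u) *m adj G))
  = (\sum_a nc ((adj (psi a) *m G *m u) 0 0) ^+ 2)%:C.
Proof.
rewrite mulmx_suml raddf_sum rmorph_sum /=; apply: eq_bigr => a _.
rewrite -mulmxA mxtrace_mulC trace_mx11 normc_sqrE !mulmxA.
rewrite -[adj (psi a) *m G *m u *m adj u *m adj G *m psi a]mulmxA.
rewrite -[adj (psi a) *m G *m u *m adj u *m (adj G *m psi a)]mulmxA mulmx11E.
by congr (_ * _); rewrite -[in LHS](adjK (psi a)) -!adjM adjE.
Qed.

Lemma tr_codeproj_channel J (pr : 'I_J -> R) (F : 'I_J -> 'M[C]_N) (u : 'cV[C]_N) :
  \tr (P *m \sum_j (pr j)%:C *: (F j *m (u *m adj u) *m adj (F j)))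
  = (\sum_j pr j * \sum_a nc ((adj (psi a) *m F j *m u) 0 0) ^+ 2)%:C.
Proof.
rewrite mulmx_sumr raddf_sum rmorph_sum /=; apply: eq_bigr => j _.
by rewrite -scalemxAr mxtraceZ tr_codeproj_sandwich rmorphM.
Qed.

Variable Psi : 'cV[C]_N.
Hypothesis Psi_code : P *m Psi = Psi.
Definition code_coord a := (adj (psi a) *m Psi) 0 0.
Local Notation c := code_coord.

Lemma adj_code_vec : adj Psi *m P = adj Psi.
Proof. by rewrite -codeproj_adj -adjM Psi_code. Qed.

Lemma code_vec_expand : Psi = \sum_a c a *: psi a.
Proof.
rewrite -{1}Psi_code mulmx_suml; apply: eq_bigr => a _.
by rewrite -mulmxA [adj (psi a) *m Psi in LHS]mx11_scalar mul_mx_scalar.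
Qed.

Lemma mulmx_code_vec (X : 'rV[C]_N) : (X *m Psi) 0 0 = \sum_b c b * (X *m psi b) 0 0.
Proof.
rewrite [in LHS]code_vec_expand mulmx_sumr summxE; apply: eq_bigr => b _.
by rewrite -scalemxAr mxE.
Qed.

Lemma braket_code_vec (G : 'M[C]_N) :
  braket Psi G Psi = \sum_a (c a)^* * (adj (psi a) *m G *m Psi) 0 0.
Proof.
rewrite /braket -[in LHS]adj_code_vec mulmx_sumr !mulmx_suml summxE.
apply: eq_bigr => a _; rewrite -!mulmxA mulmxA mulmx11E; congr (_ * _).
by rewrite -[in LHS](adjK (psi a)) -adjM adjE.
Qed.

Lemma braket_codeproj (A : 'M[C]_N) : braket Psi (P *m A *m P) Psi = braket Psi A Psi.
Proof. by rewrite /braket !mulmxA adj_code_vec -mulmxA Psi_code. Qed.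

Lemma braket_codeproj_channel J (pr : 'I_J -> R) (F : 'I_J -> 'M[C]_N) :
  braket Psi (P *m (\sum_j (pr j)%:C *: (F j *m (Psi *m adj Psi) *m adj (F j))) *m P) Psi
  = (\sum_j pr j * nc (braket Psi (F j) Psi) ^+ 2)%:C.
Proof.
rewrite braket_codeproj braket_sum rmorph_sum; apply: eq_bigr => j _.
by rewrite braketZ braket_sandwich -rmorphM.
Qed.

Lemma code_coord_unit : vnorm Psi = 1 -> \sum_a (c a)^* * c a = 1.
Proof.
move=> Psi_unit.
have sum_sq : \sum_i nc (Psi i 0) ^+ 2 = 1.
  rewrite -(sqr_sqrtr (sumr_ge0 _ (fun i _ => sqr_ge0 (nc (Psi i 0))))).
  by rewrite -/(vnorm Psi) Psi_unit expr1n.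
have := braket_code_vec 1%:M; under eq_bigr do rewrite mulmx1; move <-.
rewrite /braket mulmx1 mxE -[RHS]/(1%:C) -sum_sq rmorph_sum.
by apply: eq_bigr => i _; rewrite adjE mulrC -normc_sqrE.
Qed.

Lemma code_spread_le (G : 'M[C]_N) (lam : C) (g : R) :
  vnorm Psi = 1 ->
  (forall a b, nc (braket (psi a) G (psi b) - (a == b)%:R * lam) <= g) ->
  \sum_a nc ((adj (psi a) *m G *m Psi) 0 0) ^+ 2 - nc (braket Psi G Psi) ^+ 2
  <= K%:R ^+ 3 * g ^+ 2.
Proof.
move=> /code_coord_unit c_unit G_near; rewrite braket_code_vec.
change (spread c (fun a => (adj (psi a) *m G *m Psi) 0 0) <= K%:R ^+ 3 * g ^+ 2).
rewrite (eq_spread c _ _ (fun a => mulmx_code_vec _)).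
exact: spread_near_scalar_le G_near.
Qed.

End CodeSpace.

Lemma convex_comb_le (R : numDomainType) (I : finType) (w x : I -> R) (b : R) :
  (forall i, 0 <= w i) -> \sum_i w i = 1 -> (forall i, x i <= b) ->
  \sum_i w i * x i <= b.
Proof.
move=> w_ge0 w_sum x_le; rewrite -[b]mul1r -w_sum mulr_suml.
by apply: ler_sum => i _; apply: ler_wpM2l.
Qed.

Lemma ratio_ge_of_gap {R : realFieldType} {T W m M delta : R} :
  0 <= m -> m <= M -> M < delta -> delta <= T -> T - W <= m ->
  1 - M / delta <= T^-1 * W.
Proof.
move=> m_ge0 mM M_lt deltaT gap.
have delta_gt0 : 0 < delta by apply: le_lt_trans (le_trans m_ge0 mM) M_lt.
have T_gt0 : 0 < T by apply: lt_le_trans deltaT.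
have hq : M / delta * delta = M by rewrite divfK ?gt_eqF.
have hr : T^-1 * W * T = W by rewrite mulrAC mulVf ?mul1r ?gt_eqF.
have q_ge0 : 0 <= M / delta by rewrite divr_ge0 ?(le_trans m_ge0 mM) ?ltW.
nra.
Qed.

Theorem corollary1 (R : realType) (p n k d : nat)
  (psi : 'I_(p ^ k) -> 'cV[R[i]]_(hdim p n)) (i1 : 'I_(p ^ k))
  (gamma delta : R) :
  val i1 = 0%N ->
  is_onfamily psi ->
  0 < gamma ->
  (forall F : 'M[R[i]]_(hdim p n), dlocal d F ->
     forall a b : 'I_(p ^ k),
       Normc.normc (braket (psi a) F (psi b)
                    - (a == b)%:R * braket (psi i1) F (psi i1))
       <= gamma * opnorm F) ->
  ((p ^ k)%:R ^+ 5 * gamma ^+ 2 < delta) ->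
  @AQEDC R p n k d ((p ^ k)%:R ^+ 5 * gamma ^+ 2 / delta) delta psi.
Proof.
move=> _ psi_on gamma_gt0 near_scalar bound_lt; split=> // J pr F pr_ge0 pr_sum.
move=> F_local F_norm _ Psi Psi_unit Psi_code /=.
rewrite tr_codeproj_channel braketZ braket_codeproj_channel // -fmorphV -rmorphM /=.
have K_ge1 : 1 <= (p ^ k)%:R :> R by rewrite ler1n (leq_ltn_trans (leq0n i1)).
have leak_ge0 : 0 <= (p ^ k)%:R ^+ 3 * gamma ^+ 2 :> R.
  by rewrite mulr_ge0 ?sqr_ge0 ?exprn_ge0 ?ler0n.
move=> T_ge; apply: (ratio_ge_of_gap leak_ge0 _ bound_lt T_ge).
  by rewrite ler_wpM2r ?sqr_ge0 // -[5%N]/(3 + 2)%N exprD ler_peMr ?exprn_ge0 ?expr_ge1.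
rewrite -sumrB; under eq_bigr do rewrite -mulrBr.
apply: convex_comb_le => // j; apply: code_spread_le => // a b.
apply: le_trans (near_scalar _ (F_local j) a b) _.
by rewrite ler_piMr ?(ltW gamma_gt0).
Qed.
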